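(* Let $n,m\ge 1$, let $R\in\mathbb{R}^{2n\times 2n}$ be symmetric, $C\in\mathbb{R}^{2m\times 2n}$, and $\Sigma\in\mathbb{R}^{2m\times 2m}$ real symplectic. Set $A=\mathbb{J}_{2n}R-\tfrac12 C^{\sharp}C$ and $B=-C^{\sharp}\Sigma$, and define $$\mathcal{C}=(B\; AB\;\cdots\;A^{2n-1}B),\qquad \mathcal{O}=\begin{pmatrix}C\\ CA\\ \vdots\\ CA^{2n-1}\end{pmatrix},$$ $$\tilde{\mathcal{C}}=(B\;(\mathbb{J}_{2n}R)B\;\cdots\;(\mathbb{J}_{2n}R)^{2n-1}B),\qquad \tilde{\mathcal{O}}=\begin{pmatrix}C\\ C(\mathbb{J}_{2n}R)\\ \vdots\\ C(\mathbb{J}_{2n}R)^{2n-1}\end{pmatrix}.$$ Then $\operatorname{Im}\tilde{\mathcal{C}}=\operatorname{Im}\mathcal{C}$ and $\operatorname{Ker}\tilde{\mathcal{O}}=\operatorname{Ker}\mathcal{O}$.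
   Context: $\mathbb{J}_{2k}=\begin{pmatrix}0_{k\times k}& I_k\\ -I_k & 0_{k\times k}\end{pmatrix}$. For a $2r\times 2s$ matrix $X$, $X^{\sharp}=-\mathbb{J}_{2s}X^{\dagger}\mathbb{J}_{2r}$ (for real $X$, $X^{\dagger}=X^{\top}$). A real $2k\times 2k$ matrix $T$ is symplectic if $TT^{\sharp}=T^{\sharp}T=I_{2k}$, equivalently $T^{\top}\mathbb{J}_{2k}T=\mathbb{J}_{2k}$. *)

From mathcomp Require Import all_boot all_order all_algebra.
From mathcomp Require Import reals.
Set Implicit Arguments. Unset Strict Implicit. Unset Printing Implicit Defensive.
Import Order.TTheory GRing.Theory Num.Theory.
Local Open Scope ring_scope.

Definition Jmx {R : pzRingType} (k : nat) : 'M[R]_(k + k) :=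
  block_mx 0 1%:M (- 1%:M) 0.

Definition sharp {R : pzRingType} (r s : nat) (X : 'M[R]_(r + r, s + s))
  : 'M[R]_(s + s, r + r) := - (Jmx s *m X^T *m Jmx r).

Definition symplectic {R : pzRingType} (k : nat) (T : 'M[R]_(k + k)) : Prop :=
  T *m sharp T = 1%:M /\ sharp T *m T = 1%:M.

Definition ctrb {R : pzRingType} (p q N : nat) (A : 'M[R]_p) (B : 'M[R]_(p, q))
  : 'M[R]_(p, \sum_(k < N) q) := \mxrow_(k < N) (A ^+ k *m B).

Definition obsv {R : pzRingType} (p q N : nat) (A : 'M[R]_p) (C : 'M[R]_(q, p))
  : 'M[R]_(\sum_(k < N) q, p) := \mxcol_(k < N) (C *m A ^+ k).

Definition colspace {R : pzRingType} (a b : nat) (M : 'M[R]_(a, b)) : 'cV[R]_a -> Prop :=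
  fun v => exists u : 'cV[R]_b, v = M *m u.
Definition nullspace {R : pzRingType} (a b : nat) (M : 'M[R]_(a, b)) : 'cV[R]_b -> Prop :=
  fun v => M *m v = 0.

From mathcomp Require Import all_boot all_order all_algebra.
From mathcomp Require Import reals.
Import Order.TTheory GRing.Theory Num.Theory.
Local Open Scope ring_scope.

(** The drift [A] differs from [J R] both by a feedback through the input matrix,
    [A = J R + B (Sigma^# C / 2)] (using [Sigma Sigma^# = 1]), and by an output
    injection through the observation matrix, [A = J R - (C^# / 2) C].  Each
    power [(A0 + B F)^k B] is a combination [sum_(i <= k) A0^i B X_i], so state
    feedback cannot enlarge the controllable space; dually, each
    [C (A0 + G C)^k] is a combination [sum_(i <= k) X_i C A0^i], so output
    injection cannot shrink the unobservable space.  Applying this to [F] and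
    [-F] (resp. [G] and [-G]) gives equality.  Neither the symmetry of [R] nor
    the size of the Krylov matrices plays any role. *)

Section FeedbackInvariance.
Variables (R : pzRingType) (p q : nat).
Implicit Types (A : 'M[R]_p) (B G : 'M[R]_(p, q)) (C F : 'M[R]_(q, p)).

Lemma feedback_exp_mul_krylov A B F k :
  exists X : nat -> 'M[R]_q,
    (A + B *m F) ^+ k *m B = \sum_(i < k.+1) A ^+ i *m B *m X i.
Proof.
elim: k => [|k [X IHk]].
  by exists (fun _ => 1%:M); rewrite big_ord1 !expr0 mulmx1.
set S := \sum_(i < k.+1) _ in IHk.
exists (fun i => if i is j.+1 then X j else F *m S).
rewrite big_ord_recl /= exprS -mulmxE -mulmxA IHk mulmxDl expr0 mul1mx addrC.
congr (_ + _); first by rewrite mulmxA.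
by rewrite /S mulmx_sumr; apply: eq_bigr => i _; rewrite exprS -mulmxE !mulmxA.
Qed.

Lemma injection_mul_exp_krylov A C G k :
  exists X : nat -> 'M[R]_q,
    C *m (A + G *m C) ^+ k = \sum_(i < k.+1) X i *m C *m A ^+ i.
Proof.
elim: k => [|k [X IHk]].
  by exists (fun _ => 1%:M); rewrite big_ord1 !expr0 mul1mx.
set S := \sum_(i < k.+1) _ in IHk.
exists (fun i => if i is j.+1 then X j else S *m G).
rewrite big_ord_recl /= exprSr -mulmxE mulmxA IHk mulmxDr expr0 mulmx1 addrC.
congr (_ + _); first by rewrite !mulmxA.
by rewrite /S mulmx_suml; apply: eq_bigr => i _; rewrite exprSr -mulmxE !mulmxA.
Qed.

Lemma colspace_ctrb_feedback_sub N A B F v :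
  colspace (ctrb N (A + B *m F) B) v -> colspace (ctrb N A B) v.
Proof.
move=> [u ->].
have blockP (k : 'I_N) : exists Y : 'M[R]_(\sum_(k < N) q, q),
    (A + B *m F) ^+ k *m B = ctrb N A B *m Y.
  have [X ->] := feedback_exp_mul_krylov A B F k.
  exists (\mxcol_(i < N) (if (i <= k)%N then X i else 0)).
  rewrite /ctrb mul_mxrow_mxcol.
  rewrite (big_ord_widen N (fun i => A ^+ i *m B *m X i) (ltn_ord k)).
  rewrite big_mkcond; apply: eq_bigr => i _ /=.
  by rewrite ltnS; case: ifP; rewrite ?mulmx0.
have [Y HY] := fin_all_exists blockP.
exists (\mxrow_k Y k *m u); rewrite mulmxA mul_mxrow.
by congr (_ *m _); apply: eq_mxrow => k; rewrite HY.
Qed.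

Lemma nullspace_obsv_injection_sub N A C G v :
  nullspace (obsv N A C) v -> nullspace (obsv N (A + G *m C) C) v.
Proof.
rewrite /nullspace /obsv !mxcol_mul => Ov0.
have blockP (i : 'I_N) : C *m A ^+ i *m v = 0.
  by rewrite -(mxcolK (fun i : 'I_N => C *m A ^+ i *m v) i) Ov0 submxcol0.
rewrite -(mxcol0 (p_ := fun _ : 'I_N => q)); apply: eq_mxcol => k.
have [X ->] := injection_mul_exp_krylov A C G k.
rewrite mulmx_suml big1 // => i _.
by rewrite -!mulmxA (mulmxA C) (blockP (widen_ord (ltn_ord k) i)) mulmx0.
Qed.

Lemma colspace_ctrb_feedback N A B F v :
  colspace (ctrb N (A + B *m F) B) v <-> colspace (ctrb N A B) v.
Proof.
split; first exact: colspace_ctrb_feedback_sub.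
have {1}-> : A = A + B *m F + B *m (- F) by rewrite mulmxN addrK.
exact: colspace_ctrb_feedback_sub.
Qed.

Lemma nullspace_obsv_injection N A C G v :
  nullspace (obsv N (A + G *m C) C) v <-> nullspace (obsv N A C) v.
Proof.
split; last exact: nullspace_obsv_injection_sub.
have {2}-> : A = A + G *m C + (- G) *m C by rewrite mulNmx addrK.
exact: nullspace_obsv_injection_sub.
Qed.

End FeedbackInvariance.

Theorem lemma1 (R : realType) (n m : nat) (hn : (1 <= n)%N) (hm : (1 <= m)%N)
  (Rm : 'M[R]_(n + n)) (C : 'M[R]_(m + m, n + n)) (Sigma : 'M[R]_(m + m)) :
  Rm^T = Rm -> symplectic Sigma ->
  let A := Jmx n *m Rm - 2^-1 *: (sharp C *m C) in
  let B := - (sharp C *m Sigma) in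
  let N := (n + n)%N in
  (forall v, colspace (ctrb N (Jmx n *m Rm) B) v <-> colspace (ctrb N A B) v) /\
  (forall v, nullspace (obsv N (Jmx n *m Rm) C) v <-> nullspace (obsv N A C) v).
Proof.
move=> _ [Sigma_sharp _] A B N.
have A_feedback : A = Jmx n *m Rm + B *m (2^-1 *: (sharp Sigma *m C)).
  by rewrite mulNmx -scalemxAr mulmxA -(mulmxA (sharp C)) Sigma_sharp mulmx1.
have A_injection : A = Jmx n *m Rm + (- (2^-1 *: sharp C)) *m C.
  by rewrite mulNmx -scalemxAl.
split=> v.
- by rewrite A_feedback colspace_ctrb_feedback.
- by rewrite A_injection nullspace_obsv_injection.
Qed.
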